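(* Fix $\delta>0$ and let $c_2$ be a constant such that $p(x,y):=p^0_{\epsilon^{-2}\delta}(x,y)\le c_2\epsilon/\sqrt\delta$ for all $\epsilon$ and all $x,y\in\{0,\dots,\epsilon^{-1}\}$. Let $c^*>0$, $a^*>0$ and $$\mathcal X_{c^*,a^*}=\Big\{\xi:\ |\xi|\le c^*\epsilon^{-1},\ \max_{x\neq0}\xi(x)\le\epsilon^{-a^*}\Big\}.$$ Then for every $\xi\in\mathcal X_{c^*,a^*}$, $\max_{x\in\{0,\dots,\epsilon^{-1}\}}w(x|\xi)\le c_2c^*/\sqrt\delta$. Moreover, let $b>0$ with $a^*<b/2$ and $b+a^*<1$, and $\ell=\lfloor\epsilon^{-b}\rfloor$. Then for every integer $n$ there is $c'_n$ such that for all $\xi\in\mathcal X_{c^*,a^*}$ $$P_\xi\big[\xi^0_{\epsilon^{-2}\delta}\in\mathcal X_{c^*,a^*}\big]\ge1-c'_n\epsilon^n,$$ and there is a constant $c$ such that for all $\xi\in\mathcal X_{c^*,a^*}$ $$\sup_{x\le\epsilon^{-1}-\ell+1}E_\xi\Big[\big|\mathcal A_\ell(x,\xi^0_{\epsilon^{-2}\delta})-\mathcal A_\ell(x,w(\cdot|\xi))\big|^4\Big]\le c\,\epsilon^{2b}.$$ (The constants $c'_n$, $c$ do not depend on $\epsilon$ or $\xi$.)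
   Context: $\epsilon>0$ with $\epsilon^{-1}\in\mathbb N$; configurations $\xi:\{0,\dots,\epsilon^{-1}\}\to\mathbb N$, $|\xi|=\sum_x\xi(x)$. $p^0_t(x,y)$ is the transition probability of a continuous time simple symmetric random walk on $\{0,\dots,\epsilon^{-1}\}$ which jumps by $\pm1$ with equal probability after exponential times of mean $1$, jumps leading outside the interval being suppressed. $(\xi^0_t)$ is the process of independent such random walks, with law $P_\xi$ and expectation $E_\xi$ when started from $\xi$. $w(x|\xi)=E_\xi[\xi^0_{\epsilon^{-2}\delta}(x)]=\sum_yp^0_{\epsilon^{-2}\delta}(x,y)\xi(y)$. $\mathcal A_\ell(x,f)=\frac1\ell\sum_{y=x}^{x+\ell-1}f(y)$. *)

From HB Require Import structures.
From mathcomp Require Import all_boot all_order all_algebra.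
From mathcomp Require Import all_classical all_reals all_analysis.
Set Implicit Arguments. Unset Strict Implicit. Unset Printing Implicit Defensive.
Import Order.TTheory GRing.Theory Num.Theory.
Local Open Scope ring_scope.

Section Defs.
Variable R : realType.

Definition site (N : nat) := 'I_N.+1.
Definition config (N : nat) := {ffun 'I_N.+1 -> nat}.

Definition mass N (xi : config N) : nat := \sum_(x : 'I_N.+1) xi x.

(* One jump attempt: +-1 with probability 1/2 each; a jump leading outside
   {0..N} is suppressed (the walker stays). *)
Definition step_mx (N : nat) : 'M[R]_(N.+1) :=
  \matrix_(x < N.+1, y < N.+1)
    ((if ((x : nat).+1 <= N)%N then ((y : nat) == x.+1)%:R else ((y : nat) == x)%:R) / 2
   + (if (0 < (x : nat))%N then ((y : nat) == x.-1)%:R else ((y : nat) == x)%:R) / 2).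

(* p^0_t(x,y): jump attempts at rate 1 (exponential times of mean 1), so the
   number of attempts by time t is Poisson(t). *)
Definition p0 (N : nat) (t : R) (x y : 'I_N.+1) : R :=
  \big[+%R/0]_(0 <= k <oo) (expR (- t) * t ^+ k / (k`!)%:R * ((step_mx N) ^+ k) x y).

Definition particles N (xi : config N) : seq 'I_N.+1 :=
  flatten [seq nseq (xi x) x | x <- enum 'I_N.+1].

Definition occ N m (f : {ffun 'I_m -> 'I_N.+1}) : config N :=
  [ffun z => #|[set i | f i == z]|].

(* E_xi[F(xi^0_t)] for independent walkers started from xi *)
Definition Exp N (t : R) (xi : config N) (F : config N -> R) : R :=
  let s := particles xi in
  \sum_(f : {ffun 'I_(size s) -> 'I_N.+1})
     (\prod_(i < size s) p0 t (nth ord0 s i) (f i)) * F (occ f).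

Definition Prob N (t : R) (xi : config N) (A : pred (config N)) : R :=
  Exp t xi (fun eta => (A eta)%:R).

Definition w N (delta : R) (xi : config N) (x : 'I_N.+1) : R :=
  Exp ((N%:R) ^+ 2 * delta) xi (fun eta => (eta x)%:R).

Definition Aavg (l x : nat) (f : nat -> R) : R :=
  l%:R^-1 * \sum_(x <= y < x + l) f y.

(* the set X_{c*,a*} for eps = 1/N *)
Definition inX N (cs as_ : R) (xi : config N) : bool :=
  ((mass xi)%:R <= cs * N%:R) &&
  [forall x : 'I_N.+1, (x != ord0) ==> ((xi x)%:R <= (N%:R) `^ as_)].

End Defs.

From HB Require Import structures.
From mathcomp Require Import all_boot all_order all_algebra.
From mathcomp Require Import all_classical all_reals all_analysis.
From mathcomp Require Import lra ring zify.
Import Order.TTheory GRing.Theory Num.Theory.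
Import numFieldNormedType.Exports.
Local Open Scope ring_scope.

(* Write t = ε^-2 δ.  Under P_ξ the particles are independent walks with kernel
   p = p^0_t, so for a linear statistic S = Σ_z a(z) ξ_t(z) with 0 <= a <= 1 the
   expectation factorises over particles: ES = Σ_i Σ_z p(x_i, z) a(z), and
   E exp(λ (S - ES)) <= exp(2 λ² ES) for |λ| <= 1/2.
   - For a = 1_x this gives w(x|ξ) = ES <= |ξ| c2 ε / √δ <= c2 c^* / √δ =: K.
   - E exp(ξ_t(x)) <= exp((e - 1) K) and Markov's inequality bound P(ξ_t(x) > ε^-α)
     by exp((e - 1) K - ε^-α), α = a^*; summed over the ε^-1 + 1 sites this beats
     every power of ε, and the total mass is conserved.
   - For a the indicator of a window of length ℓ, the choice λ ~ (1 + ES)^-1/2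
     gives E (S - ES)^4 <= C (1 + ES)² <= C (1 + K)² ℓ², so the window average has
     fourth moment O(ℓ^-2) = O(ε^2b). *)

Lemma lim_sum (R : realType) (I : Type) (r : seq I) (u : I -> nat -> R) :
  (forall i, cvgn (u i)) ->
  limn (fun n => \sum_(i <- r) u i n) = \sum_(i <- r) limn (u i).
Proof.
move=> cvg_u; apply: cvg_lim => //.
elim: r => [|i r IH].
  under eq_cvg do rewrite big_nil.
  by rewrite big_nil; exact: cvg_cst.
under eq_cvg do rewrite big_cons.
by rewrite big_cons; exact: cvgD.
Qed.

Section StochasticMatrix.
Context {R : realType} {n : nat} (P : 'M[R]_n).
Hypothesis P_ge0 : forall x y, 0 <= P x y.
Hypothesis P_row_sum : forall x, \sum_y P x y = 1.

Lemma expr_mx_ge0 k x y : 0 <= (P ^+ k) x y.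
Proof.
elim: k x y => [|k IH] x y; first by rewrite expr0 mxE; case: eqP.
by rewrite exprSr -mulmxE mxE; apply: sumr_ge0 => i _; rewrite mulr_ge0.
Qed.

Lemma expr_mx_row_sum k x : \sum_y (P ^+ k) x y = 1.
Proof.
elim: k x => [|k IH] x.
  rewrite expr0; under eq_bigr do rewrite mxE.
  by rewrite (bigD1 x) //= eqxx big1 ?addr0 // => y /negbTE; rewrite eq_sym => ->.
rewrite exprSr -mulmxE; under eq_bigr do rewrite mxE.
by rewrite exchange_big /=; under eq_bigr do rewrite -mulr_sumr P_row_sum mulr1.
Qed.

Lemma expr_mx_le1 k x y : (P ^+ k) x y <= 1.
Proof.
rewrite -(expr_mx_row_sum k x) (bigD1 y) //= lerDl.
by apply: sumr_ge0 => z _; exact: expr_mx_ge0.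
Qed.

Variable t : R.
Hypothesis t_ge0 : 0 <= t.

(* The transition kernel after time t when P is applied at the jump times of a
   rate-1 Poisson clock. *)
Definition poisson_term x y k := expR (- t) * t ^+ k / (k`!)%:R * (P ^+ k) x y.

Definition poisson x y := \big[+%R/0]_(0 <= k <oo) poisson_term x y k.

Lemma poisson_term_ge0 x y k : 0 <= poisson_term x y k.
Proof. by rewrite /poisson_term !mulr_ge0 ?invr_ge0 ?expR_ge0 ?exprn_ge0 ?expr_mx_ge0. Qed.

Lemma poisson_term_le x y k : poisson_term x y k <= exp_coeff t k.
Proof.
have -> : poisson_term x y k = t ^+ k / (k`!)%:R * (expR (- t) * (P ^+ k) x y).
  by rewrite /poisson_term; ring.
rewrite /exp_coeff /= ler_piMr ?divr_ge0 ?exprn_ge0 // mulr_ile1 ?expR_ge0 //.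
- exact: expr_mx_ge0.
- by rewrite expR_le1 oppr_le0.
- exact: expr_mx_le1.
Qed.

Lemma is_cvg_poisson x y : cvgn (series (poisson_term x y)).
Proof.
apply: (@series_le_cvg _ _ (exp_coeff t)).
- exact: poisson_term_ge0.
- by move=> k; rewrite /exp_coeff /= divr_ge0 ?exprn_ge0.
- exact: poisson_term_le.
exact: is_cvg_series_exp_coeff.
Qed.

Lemma poisson_ge0 x y : 0 <= poisson x y.
Proof.
rewrite /poisson; apply: le_trans (nondecreasing_cvgn_le _ (is_cvg_poisson x y) 0).
  by rewrite /series /= big_geq.
by apply: nondecreasing_series => k _ _; exact: poisson_term_ge0.
Qed.

Lemma poisson_row_sum x : \sum_y poisson x y = 1.
Proof.
rewrite /poisson -lim_sum; last by move=> y; exact: is_cvg_poisson.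
rewrite (_ : (fun m => _) = (fun m => expR (- t) * series (exp_coeff t) m)).
  apply: cvg_lim => //; rewrite -(expRxMexpNx_1 t) mulrC.
  by apply: cvgM; [exact: cvg_cst | exact: is_cvg_series_exp_coeff].
apply/funext => m; rewrite /series /= exchange_big /= big_distrr /=.
apply: eq_bigr => k _; rewrite /poisson_term -big_distrr /= expr_mx_row_sum.
by rewrite /exp_coeff /= mulr1 mulrA.
Qed.

End StochasticMatrix.

Lemma sum_ord_indicator {R : numDomainType} N k : (k <= N)%N ->
  \sum_(y : 'I_N.+1) (((y : nat) == k)%:R : R) = 1.
Proof.
move=> kN; rewrite (bigD1 (Ordinal (kN : k < N.+1)%N)) //= eqxx big1 ?addr0 //.
by move=> y; rewrite -(inj_eq val_inj) /= => /negbTE ->.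
Qed.

Section StepMatrix.
Context {R : realType} {N : nat}.

Lemma step_mx_ge0 x y : 0 <= step_mx R N x y.
Proof. by rewrite mxE; apply: addr_ge0; apply: divr_ge0 => //; case: ifP. Qed.

Lemma step_mx_row_sum x : \sum_y step_mx R N x y = 1.
Proof.
under eq_bigr do rewrite mxE.
rewrite big_split /= -!big_distrl /=.
have x_le : ((x : nat) <= N)%N by rewrite -ltnS.
have x_pred : ((x : nat).-1 <= N)%N by rewrite (leq_trans (leq_pred _)).
by case: (boolP (x < N)%N) => x_lt; case: (boolP (0 < x)%N) => x_gt0;
  rewrite !sum_ord_indicator //; lra.
Qed.

End StepMatrix.

Lemma p0_ge0 {R : realType} {N : nat} {t : R} (x y : 'I_N.+1) : 0 <= t -> 0 <= p0 t x y.
Proof. by move=> t_ge0; apply: poisson_ge0 => //; [exact: step_mx_ge0 | exact: step_mx_row_sum]. Qed.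

Lemma p0_row_sum {R : realType} {N : nat} {t : R} (x : 'I_N.+1) : 0 <= t -> \sum_y p0 t x y = 1.
Proof. by move=> t_ge0; apply: poisson_row_sum => //; [exact: step_mx_ge0 | exact: step_mx_row_sum]. Qed.

Lemma size_particles N (xi : config N) : size (particles xi) = mass xi.
Proof.
rewrite /particles size_flatten /shape -map_comp /mass sumnE big_map big_enum /=.
by apply: eq_bigr => x _; rewrite /= size_nseq.
Qed.

Lemma mass_occ N m (f : {ffun 'I_m -> 'I_N.+1}) : mass (occ f) = m.
Proof.
rewrite /mass (eq_bigr (fun z => \sum_(i | true && (f i == z)) 1)); last first.
  by move=> z _; rewrite ffunE sum1dep_card cardsE.
by rewrite -(partition_big _ xpredT) // sum1_card card_ord.
Qed.

Section Occupation.
Context {R : realType} {N : nat}.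

Definition linstat (a : 'I_N.+1 -> R) (e : config N) : R := \sum_z a z * (e z)%:R.

Lemma linstat_occ m (f : {ffun 'I_m -> 'I_N.+1}) (a : 'I_N.+1 -> R) :
  linstat a (occ f) = \sum_(i < m) a (f i).
Proof.
have occE z : ((occ f z)%:R : R) = \sum_(i < m) (f i == z)%:R.
  by rewrite ffunE -sumr_const big_mkcond; apply: eq_bigr => i _; rewrite inE; case: eqP.
rewrite /linstat; under eq_bigr => z _ do rewrite occE big_distrr /=.
rewrite exchange_big /=; apply: eq_bigr => i _.
rewrite (bigD1 (f i)) //= eqxx mulr1 big1 ?addr0 // => z /negbTE.
by rewrite eq_sym => ->; rewrite mulr0.
Qed.

Lemma linstat_indicator (x : 'I_N.+1) (e : config N) :
  linstat (fun z => ((z == x)%:R : R)) e = (e x)%:R.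
Proof.
rewrite /linstat (bigD1 x) //= eqxx mul1r big1 ?addr0 // => z /negbTE ->.
by rewrite mul0r.
Qed.

End Occupation.

Section ExponentialInequalities.
Context {R : realType}.
Implicit Types x y : R.

Lemma pow_fact_le_expR y m : 0 <= y -> y ^+ m.+1 / (m.+1`!)%:R <= expR y.
Proof. by move=> y_ge0; have := expR_ge1Dxn m y_ge0; lra. Qed.

Lemma expR_mul1B_le1 x : expR x * (1 - x) <= 1.
Proof.
have := expR_ge1Dx (- x); have := expRxMexpNx_1 x; have := expR_ge0 x.
nra.
Qed.

(* For x <= 0 compare with 1 / (1 - x), for 0 < x with (1 - x / 2)^-2. *)
Lemma expR_le_quadratic x : x <= 1 -> expR x <= 1 + x + 2 * x ^+ 2.
Proof.
move=> x_le1; have [x_le0|x_gt0] := lerP x 0.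
  have := expR_mul1B_le1 x.
  have : 1 <= (1 + x + 2 * x ^+ 2) * (1 - x).
    have : 0 <= x ^+ 2 * (1 - 2 * x) by apply: mulr_ge0; [exact: sqr_ge0 | lra].
    rewrite expr2; nra.
  move=> q_ge e_le; have : 0 <= (1 + x + 2 * x ^+ 2 - expR x) * (1 - x) by lra.
  by rewrite pmulr_lge0; lra.
have ex : expR x = expR (x / 2) ^+ 2 by rewrite -expRM_natr; congr expR; field.
have e_le : expR x * (1 - x / 2) ^+ 2 <= 1.
  have := expR_mul1B_le1 (x / 2).
  have : 0 <= expR (x / 2) * (1 - x / 2) by apply: mulr_ge0; [exact: expR_ge0 | lra].
  rewrite ex -exprMn expr2; nra.
have : 1 <= (1 + x + 2 * x ^+ 2) * (1 - x / 2) ^+ 2.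
  have : 0 <= x ^+ 2 * ((1 - x) * (5 - 2 * x)).
    by apply: mulr_ge0; [exact: sqr_ge0 | apply: mulr_ge0; lra].
  rewrite !expr2; nra.
move=> q_ge; have : 0 <= (1 + x + 2 * x ^+ 2 - expR x) * (1 - x / 2) ^+ 2 by lra.
by rewrite pmulr_lge0; [lra | apply: exprn_gt0; lra].
Qed.

Lemma expr4_le_expR x : x ^+ 4 <= 24 * (expR x + expR (- x)).
Proof.
have e_ge0 := expR_ge0 x; have eN_ge0 := expR_ge0 (- x).
have x4 : x ^+ 4 = (- x) ^+ 4 by ring.
have fact4 : (4`!)%:R = 24 :> R by [].
have [x_ge0|x_lt0] := lerP 0 x.
  by have := pow_fact_le_expR x 3 x_ge0; rewrite fact4; lra.
have : 0 <= - x by lra.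
by move/(pow_fact_le_expR (- x) 3); rewrite fact4 -x4; lra.
Qed.

Lemma expr4_le_expR_scaled lam x : 0 < lam ->
  x ^+ 4 <= 24 / lam ^+ 4 * (expR (lam * x) + expR (- (lam * x))).
Proof.
move=> lam_gt0; have lam4_gt0 : 0 < lam ^+ 4 by exact: exprn_gt0.
rewrite mulrAC ler_pdivlMr // mulrC -exprMn.
exact: expr4_le_expR.
Qed.

End ExponentialInequalities.

Section Expectation.
Context {R : realType} {N : nat} {t : R} {xi : config N}.
Hypothesis t_ge0 : 0 <= t.
Let s := particles xi.
Let p i z := p0 t (nth ord0 s i) z.

Lemma eq_Exp {F G : config N -> R} : F =1 G -> Exp t xi F = Exp t xi G.
Proof. by move=> /funext ->. Qed.

Lemma ler_Exp {F G : config N -> R} : (forall e, mass e = mass xi -> F e <= G e) ->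
  Exp t xi F <= Exp t xi G.
Proof.
move=> FG; apply: ler_sum => f _; apply: ler_wpM2l.
  by apply: prodr_ge0 => i _; exact: p0_ge0.
by apply: FG; rewrite mass_occ size_particles.
Qed.

Lemma Exp_add F G : Exp t xi (fun e => F e + G e) = Exp t xi F + Exp t xi G.
Proof. by rewrite /Exp /= -big_split; apply: eq_bigr => f _; rewrite mulrDr. Qed.

Lemma Exp_mull c F : Exp t xi (fun e => c * F e) = c * Exp t xi F.
Proof. by rewrite /Exp /= big_distrr; apply: eq_bigr => f _; rewrite mulrCA. Qed.

Lemma Exp_sum (I : Type) (r : seq I) (P : pred I) (F : I -> config N -> R) :
  Exp t xi (fun e => \sum_(i <- r | P i) F i e) = \sum_(i <- r | P i) Exp t xi (F i).
Proof.
by rewrite /Exp /= exchange_big /=; apply: eq_bigr => f _; rewrite big_distrr.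
Qed.

Lemma Exp_cst c : Exp t xi (fun=> c) = c.
Proof.
rewrite /Exp /= -big_distrl /=.
rewrite -(bigA_distr_bigA (fun (i : 'I_(size s)) z => p i z)) big1 ?mul1r // => i _.
exact: p0_row_sum.
Qed.

Lemma Exp_expR_linstat a :
  Exp t xi (fun e => expR (linstat a e)) = \prod_(i < size s) \sum_z p i z * expR (a z).
Proof.
rewrite /Exp /= bigA_distr_bigA /=; apply: eq_bigr => f _.
by rewrite linstat_occ expR_sum big_split.
Qed.

Lemma Exp_linstat a : Exp t xi (linstat a) = \sum_(i < size s) \sum_z p i z * a z.
Proof.
rewrite /Exp /=; under eq_bigr do rewrite linstat_occ big_distrr /=.
rewrite exchange_big /=; apply: eq_bigr => i _.
transitivity (\sum_(f : {ffun 'I_(size s) -> 'I_N.+1})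
   \prod_(j < size s) (p j (f j) * (if j == i then a (f j) else 1))).
  apply: eq_bigr => f _; rewrite big_split /=; congr (_ * _).
  by rewrite (bigD1 i) //= eqxx big1 ?mulr1 // => j /negbTE ->.
rewrite -(bigA_distr_bigA (fun (j : 'I_(size s)) z => p j z * (if j == i then a z else 1))) /=.
rewrite (bigD1 i) //= eqxx [X in _ * X]big1 ?mulr1 // => j /negbTE ji.
by under eq_bigr do rewrite ji mulr1; exact: p0_row_sum.
Qed.

Lemma Exp_linstat_sum a :
  Exp t xi (linstat a) = \sum_z a z * Exp t xi (fun e => (e z)%:R).
Proof. by rewrite /linstat Exp_sum; apply: eq_bigr => z _; exact: Exp_mull. Qed.

Lemma Exp_occ x : Exp t xi (fun e => (e x)%:R) = \sum_(i < size s) p i x.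
Proof.
rewrite -(eq_Exp (linstat_indicator x)) Exp_linstat; apply: eq_bigr => i _.
rewrite (bigD1 x) //= eqxx mulr1 big1 ?addr0 // => z /negbTE ->.
by rewrite mulr0.
Qed.

Lemma Exp_expR_occ_le x :
  Exp t xi (fun e => expR (e x)%:R) <= expR ((expR 1 - 1) * Exp t xi (fun e => (e x)%:R)).
Proof.
rewrite -(eq_Exp (fun e => congr1 expR (linstat_indicator x e))).
rewrite Exp_expR_linstat Exp_occ mulr_sumr expR_sum.
apply: ler_prod => i _; apply/andP; split.
  by apply: sumr_ge0 => z _; rewrite mulr_ge0 ?expR_ge0 ?p0_ge0.
have -> : \sum_z p i z * expR (z == x)%:R = \sum_z p i z + p i x * (expR 1 - 1).
  rewrite (bigD1 x) //= [X in _ = X + _](bigD1 x) //= eqxx.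
  rewrite (eq_bigr (fun z => p i z)); last by move=> z /negbTE ->; rewrite expR0 mulr1.
  lra.
by rewrite p0_row_sum //; have := expR_ge1Dx ((expR 1 - 1) * p i x); lra.
Qed.

Lemma kernel_avg_bounds a i : (forall z, 0 <= a z <= 1) ->
  0 <= \sum_z p i z * a z <= 1.
Proof.
move=> a01; apply/andP; split.
  by apply: sumr_ge0 => z _; rewrite mulr_ge0 ?p0_ge0 //; case/andP: (a01 z).
rewrite -(p0_row_sum (nth ord0 s i) t_ge0); apply: ler_sum => z _.
by rewrite ler_piMr ?p0_ge0 //; case/andP: (a01 z).
Qed.

(* By [expR u <= 1 + u + 2 u^2] and [a^2 <= a] the integrand is bounded by a
   function affine in [a z]. *)
Lemma kernel_expR_centered_le a lam i : (forall z, 0 <= a z <= 1) ->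
  -(1/2) <= lam <= 1/2 ->
  \sum_z p i z * expR (lam * (a z - \sum_z p i z * a z)) <=
  expR (2 * lam ^+ 2 * \sum_z p i z * a z).
Proof.
move=> a01 /andP[lam_ge lam_le].
have /andP[q_ge0 q_le1] := kernel_avg_bounds a i a01.
set q := \sum_z p i z * a z in q_ge0 q_le1 *.
set A := 1 - lam * q + 2 * lam ^+ 2 * q ^+ 2.
set B := lam + 2 * lam ^+ 2 * (1 - 2 * q).
apply: (@le_trans _ _ (\sum_z p i z * (A + B * a z))).
  apply: ler_sum => z _; apply: ler_wpM2l; first exact: p0_ge0.
  case/andP: (a01 z) => az_ge0 az_le1.
  have := @expR_le_quadratic R (lam * (a z - q)) ltac:(nra).
  have : 0 <= lam ^+ 2 * (a z - a z ^+ 2).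
    by apply: mulr_ge0; [exact: sqr_ge0 | rewrite expr2; nra].
  by rewrite /A /B !expr2; nra.
have -> : \sum_z p i z * (A + B * a z) = A * \sum_z p i z + B * q.
  rewrite big_distrr [X in _ = _ + X]big_distrr -big_split /=.
  by apply: eq_bigr => z _; ring.
rewrite p0_row_sum // mulr1.
have := expR_ge1Dx (2 * lam ^+ 2 * q).
have : 0 <= lam ^+ 2 * q ^+ 2 by apply: mulr_ge0; exact: sqr_ge0.
by rewrite /A /B; lra.
Qed.

Lemma Exp_expR_centered_le a lam : (forall z, 0 <= a z <= 1) ->
  -(1/2) <= lam <= 1/2 ->
  Exp t xi (fun e => expR (lam * (linstat a e - Exp t xi (linstat a))))
  <= expR (2 * lam ^+ 2 * Exp t xi (linstat a)).
Proof.
move=> a01 lam_bd; rewrite Exp_linstat; set mu := \sum_(i < size s) _.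
rewrite (eq_Exp (G := fun e => expR (- (lam * mu)) * expR (linstat (fun z => lam * a z) e))).
  rewrite Exp_mull Exp_expR_linstat /mu mulr_sumr -sumrN expR_sum -big_split /=.
  rewrite mulr_sumr expR_sum; apply: ler_prod => i _; apply/andP; split.
    by rewrite mulr_ge0 ?expR_ge0 //; apply: sumr_ge0 => z _; rewrite mulr_ge0 ?expR_ge0 ?p0_ge0.
  apply: le_trans (kernel_expR_centered_le a lam i a01 lam_bd); rewrite le_eqVlt; apply/orP; left.
  rewrite mulr_sumr; apply/eqP/eq_bigr => z _.
  by rewrite mulrCA -expRD; congr (_ * expR _); ring.
move=> e; rewrite -expRD /linstat mulrBr addrC; congr (expR (_ + _)).
by rewrite big_distrr /=; apply: eq_bigr => z _; rewrite mulrA.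
Qed.

(* The fourth moment through [x^4 <= 24 (e^x + e^-x)], at the scale lam = 1 / (2 sqrt(1 + mu)). *)
Lemma Exp_centered4_le a : (forall z, 0 <= a z <= 1) ->
  Exp t xi (fun e => (linstat a e - Exp t xi (linstat a)) ^+ 4)
  <= 768 * expR 1 * (1 + Exp t xi (linstat a)) ^+ 2.
Proof.
move=> a01; set mu := Exp t xi (linstat a).
have mu_ge0 : 0 <= mu.
  by rewrite /mu Exp_linstat; apply: sumr_ge0 => i _; case/andP: (kernel_avg_bounds a i a01).
set L := 1 + mu; set r := Num.sqrt L.
have r2 : r ^+ 2 = L by rewrite sqr_sqrtr /L //; lra.
have r_ge1 : 1 <= r by rewrite -sqrtr1 ler_sqrt /L; lra.
set lam := (2 * r)^-1.
have lam_gt0 : 0 < lam by rewrite invr_gt0; lra.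
have lam_le : lam <= 1/2 by rewrite /lam invfM ler_pdivrMr; [nra | lra].
have lam4 : 24 / lam ^+ 4 = 384 * L ^+ 2.
  by rewrite /lam -r2; field; apply: lt0r_neq0; lra.
have lam2mu : 2 * lam ^+ 2 * mu <= 1.
  have -> : 2 * lam ^+ 2 = (2 * L)^-1 by rewrite /lam -r2; field; apply: lt0r_neq0; lra.
  by rewrite mulrC ler_pdivrMr /L; lra.
apply: le_trans (ler_Exp (G := fun e => 384 * L ^+ 2 *
   (expR (lam * (linstat a e - mu)) + expR ((- lam) * (linstat a e - mu)))) _) _.
  by move=> e _; rewrite -lam4 mulNr; exact: expr4_le_expR_scaled.
rewrite Exp_mull Exp_add.
have E1 := Exp_expR_centered_le a lam a01 ltac:(apply/andP; split; lra).
have E2 := Exp_expR_centered_le a (- lam) a01 ltac:(apply/andP; split; lra).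
rewrite sqrrN -/mu in E1 E2.
have e_le : expR (2 * lam ^+ 2 * mu) <= expR 1 by rewrite ler_expR.
have : 0 <= 384 * L ^+ 2 by apply: mulr_ge0; [lra | exact: sqr_ge0].
nra.
Qed.

End Expectation.

Lemma Prob_ge0 {R : realType} {N : nat} {t : R} (xi : config N) A : 0 <= t -> 0 <= Prob t xi A.
Proof. by move=> t_ge0; rewrite -(Exp_cst t_ge0 (xi := xi) 0); exact: ler_Exp. Qed.

(* A site holding more than [a] particles costs [expR (- a) * expR (e x)] by
   Chernoff's bound; the mass constraint of [inX] is preserved by the dynamics. *)
Lemma Prob_notinX_le {R : realType} {N : nat} {t : R} (xi : config N) (cs as_ K : R) :
  0 <= t -> (mass xi)%:R <= cs * N%:R -> (forall x, Exp t xi (fun e => (e x)%:R) <= K) ->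
  1 - Prob t xi (inX cs as_) <= N.+1%:R * (expR ((expR 1 - 1) * K) * expR (- N%:R `^ as_)).
Proof.
move=> t_ge0 mass_le occ_le; set a := N%:R `^ as_.
rewrite /Prob -[X in X - _](Exp_cst t_ge0 (xi := xi)) -mulN1r -Exp_mull -Exp_add.
apply: le_trans (ler_Exp t_ge0 (G := fun e => \sum_x expR (- a) * expR (e x)%:R) _) _.
  move=> e mass_e; rewrite /inX mass_e mass_le /=.
  have [_|/forallPn [x]] := boolP [forall x : 'I_N.+1, (x != ord0) ==> ((e x)%:R <= a)].
    by rewrite mulr1 addrN; apply: sumr_ge0 => x _; rewrite mulr_ge0 ?expR_ge0.
  rewrite negb_imply -ltNge mulr0 addr0 (bigD1 x) //= => /andP[_ ex_gt].
  have : 1 <= expR (- a) * expR (e x)%:R.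
    by rewrite -expRD; have := expR_ge1Dx (- a + (e x)%:R); lra.
  have : 0 <= \sum_(z | z != x) expR (- a) * expR (e z)%:R.
    by apply: sumr_ge0 => z _; rewrite mulr_ge0 ?expR_ge0.
  lra.
rewrite Exp_sum.
apply: (@le_trans _ _ (\sum_(x < N.+1) expR ((expR 1 - 1) * K) * expR (- a))).
  apply: ler_sum => x _.
  rewrite Exp_mull mulrC; apply: ler_wpM2r; first exact: expR_ge0.
  apply: le_trans (Exp_expR_occ_le t_ge0 x) _; rewrite ler_expR.
  by apply: ler_wpM2l; [rewrite subr_ge0 ltW // expR_gt1 | exact: occ_le].
by rewrite sumr_const card_ord mulr_natl.
Qed.

(* With M + 1 >= (k + 1) / a: [N^(k+1) <= (N^a)^(M+1) <= (M+1)! expR (N^a)]. *)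
Lemma expR_powR_decay {R : realType} (a : R) k : 0 < a ->
  exists C : R, forall N : nat, (0 < N)%N ->
    N.+1%:R * expR (- N%:R `^ a) <= C * (N%:R^-1) ^+ k.
Proof.
move=> a_gt0; pose M := Num.truncn (k.+1%:R / a).
have kM : k.+1%:R <= a * M.+1%:R.
  by have := ltW (truncnS_gt (k.+1%:R / a)); rewrite ler_pdivrMr // mulrC.
pose F : R := (M.+1`!)%:R.
have F_gt0 : 0 < F by rewrite ltr0n fact_gt0.
exists (2 * F) => N N_gt0.
have N_ge1 : 1 <= N%:R :> R by rewrite ler1n.
set y := N%:R `^ a.
have Nk_le : N%:R ^+ k.+1 <= F * expR y.
  apply: (@le_trans _ _ (y ^+ M.+1)).
    rewrite /y -powR_mulrn ?powR_ge0 // -powRrM -powR_mulrn; last lra.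
    exact: ler_powR.
  by have := pow_fact_le_expR y M (powR_ge0 _ _); rewrite ler_pdivrMr // mulrC.
have Nk_gt0 : 0 < N%:R ^+ k :> R by apply: exprn_gt0; lra.
rewrite expRN exprVn ler_pdivrMr ?expR_gt0 // mulrAC ler_pdivlMr //.
move: Nk_le; rewrite exprS -natr1; nra.
Qed.

Lemma sum_nat_eq_le1 {R : numDomainType} (m n k : nat) : \sum_(m <= y < n) ((y == k)%:R : R) <= 1.
Proof.
have [k_in|k_notin] := boolP (k \in index_iota m n).
  rewrite (bigD1_seq k) //= ?iota_uniq // eqxx big1_seq ?addr0 //.
  by move=> y /andP[/negbTE -> _].
by rewrite big1_seq // => y /andP[_ y_in]; case: eqP => // yk; rewrite -yk y_in in k_notin.
Qed.

Section Window.
Context {R : realType} {N : nat}.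

Definition window (x l : nat) (z : 'I_N.+1) : R :=
  \sum_(x <= y < x + l) ((inord y : 'I_N.+1) == z)%:R.

Lemma window_sum x l (g : 'I_N.+1 -> R) :
  \sum_(x <= y < x + l) g (inord y) = \sum_z window x l z * g z.
Proof.
rewrite /window; under [RHS]eq_bigr do rewrite big_distrl /=.
rewrite exchange_big /=; apply: eq_bigr => y _.
rewrite (bigD1 (inord y)) //= eqxx mul1r big1 ?addr0 // => z.
by rewrite eq_sym => /negbTE ->; rewrite mul0r.
Qed.

Lemma window_bounds x l z : (x + l <= N.+1)%N -> 0 <= window x l z <= 1.
Proof.
move=> xl_le; apply/andP; split; first by apply: sumr_ge0 => y _; case: eqP.
rewrite /window (eq_big_nat _ _ (F2 := fun y => ((y == (z : nat))%:R : R))).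
  exact: sum_nat_eq_le1.
move=> y /andP[_ y_lt]; have y_le : (y < N.+1)%N by apply: leq_trans xl_le.
by rewrite -(inj_eq val_inj) /= inordK.
Qed.

End Window.

Lemma truncn_powR_bounds {R : realType} N (b : R) : (0 < N)%N -> 0 < b <= 1 ->
  let l := Num.truncn (N%:R `^ b) in
  [/\ (0 < l)%N, (l <= N)%N & N%:R `^ b <= 2 * l%:R].
Proof.
move=> N_gt0 /andP[b_gt0 b_le1] l.
have N_ge1 : 1 <= N%:R :> R by rewrite ler1n.
have Nb_ge1 : 1 <= N%:R `^ b by have := ler_powR N_ge1 (ltW b_gt0); rewrite powRr0.
have Nb_le : N%:R `^ b <= N%:R by exact: ler1_powR.
have /andP[l_le l_gt] := truncn_itv (powR_ge0 N%:R b).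
have l_gt0 : (0 < l)%N by rewrite /l truncn_ge_nat ?powR_ge0.
have l_ge1 : 1 <= l%:R :> R by rewrite ler1n.
split => //; first by rewrite -(ler_nat R); lra.
by move: l_gt; rewrite -natr1; lra.
Qed.

Lemma powR_inv_mul2 {R : realType} (x r : R) : 0 <= x ->
  x^-1 `^ (2 * r) = ((x `^ r) ^+ 2)^-1.
Proof.
by move=> x_ge0; rewrite -powR_inv1 // -powRrM mulN1r powRN mulrC powRrM powR_mulrn ?powR_ge0.
Qed.

Lemma window_fourth_moment_scaling {R : realType} (l Nb K m D : R) :
  1 <= l -> 0 < Nb <= 2 * l -> 0 <= m <= l * K -> 0 <= D ->
  l^-1 ^+ 4 * (D * (1 + m) ^+ 2) <= 4 * D * (1 + K) ^+ 2 / Nb ^+ 2.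
Proof.
move=> l_ge1 /andP[Nb_gt0 Nb_le] /andP[m_ge0 m_le] D_ge0.
set u := l^-1.
have ul : u * l = 1 by rewrite mulVf //; lra.
have u_gt0 : 0 < u by rewrite invr_gt0; lra.
have u_le1 : u <= 1 by rewrite invf_le1; lra.
have uNb : u * Nb <= 2 by nra.
have um : u * (1 + m) <= 1 + K.
  have : u * m <= K by rewrite -[K]mul1r -ul -mulrA ler_pM2l.
  lra.
rewrite ler_pdivlMr ?exprn_gt0 //.
have -> : u ^+ 4 * (D * (1 + m) ^+ 2) * Nb ^+ 2 = D * ((u * Nb) ^+ 2 * (u * (1 + m)) ^+ 2).
  by ring.
have -> : 4 * D * (1 + K) ^+ 2 = D * (2 ^+ 2 * (1 + K) ^+ 2) by ring.
apply: ler_wpM2l => //; apply: ler_pM; rewrite ?sqr_ge0 //.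
- by rewrite lerXn2r // nnegrE; nra.
- by rewrite lerXn2r // nnegrE; nra.
Qed.

Section Estimates.
Context {R : realType} {delta c2 cs as_ : R}.
Hypothesis delta_gt0 : 0 < delta.
Hypothesis p0_le : forall N : nat, (0 < N)%N -> forall x y : 'I_N.+1,
  p0 ((N%:R) ^+ 2 * delta) x y <= c2 * (N%:R)^-1 / Num.sqrt delta.

Let time_ge0 N : 0 <= (N%:R : R) ^+ 2 * delta.
Proof. by rewrite mulr_ge0 ?exprn_ge0 // ltW. Qed.

Lemma w_le N : (0 < N)%N -> forall xi : config N, inX cs as_ xi ->
  forall x, w delta xi x <= c2 * cs / Num.sqrt delta.
Proof.
move=> N_gt0 xi /andP[mass_le _] x; rewrite /w (Exp_occ (time_ge0 N)).
set B := c2 * N%:R^-1 / Num.sqrt delta.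
have B_ge0 : 0 <= B by apply: le_trans (p0_le N N_gt0 x x); exact: p0_ge0.
apply: (@le_trans _ _ (\sum_(i < size (particles xi)) B)).
  by apply: ler_sum => i _; exact: p0_le.
rewrite sumr_const card_ord size_particles -mulr_natl.
apply: le_trans (ler_wpM2r B_ge0 mass_le) _; rewrite le_eqVlt; apply/orP; left.
have N_neq0 : N%:R != 0 :> R by rewrite pnatr_eq0 -lt0n.
have sqrt_neq0 : Num.sqrt delta != 0 by rewrite sqrtr_eq0 -ltNge.
by apply/eqP; rewrite /B; field; rewrite N_neq0 sqrt_neq0.
Qed.

Lemma Prob_inX_ge : 0 < as_ -> forall n : int, exists c' : R,
  forall N : nat, (0 < N)%N -> forall xi : config N, inX cs as_ xi ->
    Prob ((N%:R) ^+ 2 * delta) xi (inX cs as_) >= 1 - c' * ((N%:R)^-1) ^ n.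
Proof.
move=> as_gt0 [k|k].
  have [C decay] := expR_powR_decay _ k as_gt0.
  exists (expR ((expR 1 - 1) * (c2 * cs / Num.sqrt delta)) * C) => N N_gt0 xi xiX.
  have := Prob_notinX_le xi cs as_ _ (time_ge0 N) (proj1 (andP xiX)) (w_le _ N_gt0 xi xiX).
  have := decay N N_gt0; rewrite /exprz.
  have := expR_ge0 ((expR 1 - 1) * (c2 * cs / Num.sqrt delta)).
  set E := expR ((expR 1 - 1) * _); set Z := expR (- _); set Q := (_^-1) ^+ k.
  nra.
exists 1 => N N_gt0 xi _.
have := Prob_ge0 xi (inX cs as_) (time_ge0 N).
rewrite /exprz exprVn invrK mul1r.
have : 1 <= (N%:R : R) ^+ k.+1 by apply: exprn_ege1; rewrite ler1n.
lra.
Qed.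

Lemma Exp_Aavg4_le b : 0 < b -> b < 1 -> exists c : R,
  forall N : nat, (0 < N)%N -> forall xi : config N, inX cs as_ xi ->
    let l := Num.truncn ((N%:R : R) `^ b) in
    forall x : nat, (x <= N - l + 1)%N ->
      Exp ((N%:R) ^+ 2 * delta) xi
        (fun eta => (Aavg l x (fun y => (eta (inord y))%:R)
                     - Aavg l x (fun y => w delta xi (inord y))) ^+ 4)
      <= c * ((N%:R)^-1) `^ (2 * b).
Proof.
move=> b_gt0 b_lt1; set K := c2 * cs / Num.sqrt delta.
exists (4 * (768 * expR 1) * (1 + K) ^+ 2) => N N_gt0 xi xiX l x x_le.
have b_bd : 0 < b <= 1 by apply/andP; split; lra.
have [] := truncn_powR_bounds N b N_gt0 b_bd; rewrite -/l => l_gt0 l_le Nb_le.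
set t := N%:R ^+ 2 * delta.
have window01 (z : 'I_N.+1) : 0 <= (window x l z : R) <= 1 by apply: window_bounds; lia.
pose S : config N -> R := linstat (window x l).
have ES_le : Exp t xi S <= l%:R * K.
  rewrite Exp_linstat_sum -window_sum.
  apply: (@le_trans _ _ (\sum_(x <= y < x + l) K)).
    by apply: ler_sum => y _; exact: (w_le _ N_gt0 xi xiX).
  by rewrite sumr_const_nat addKn mulr_natl.
have ES_ge0 : 0 <= Exp t xi S.
  rewrite -(Exp_cst (time_ge0 N) (xi := xi) 0); apply: ler_Exp => // e _.
  by apply: sumr_ge0 => z _; rewrite mulr_ge0 //; case/andP: (window01 z).
rewrite (eq_Exp (G := fun e => l%:R^-1 ^+ 4 * (S e - Exp t xi S) ^+ 4)); last first.
  move=> e; rewrite /Aavg -mulrBr exprMn (window_sum x l (fun z => (e z)%:R)).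
  by rewrite (window_sum x l (w delta xi)) /S Exp_linstat_sum.
rewrite Exp_mull powR_inv_mul2 ?ler0n //.
have E4 := Exp_centered4_le (xi := xi) (time_ge0 N) _ window01.
apply: le_trans (ler_wpM2l _ E4) _; first by rewrite exprn_ge0 // invr_ge0.
apply: window_fourth_moment_scaling.
- by rewrite ler1n.
- by rewrite Nb_le andbT powR_gt0 // ltr0n.
- by rewrite ES_ge0.
- by apply: mulr_ge0; [lra | exact: expR_ge0].
Qed.

End Estimates.

Theorem mainTheorem8 (R : realType) (delta c2 cs as_ : R) :
  0 < delta ->
  (forall N : nat, (0 < N)%N -> forall x y : 'I_N.+1,
     p0 ((N%:R) ^+ 2 * delta) x y <= c2 * (N%:R)^-1 / Num.sqrt delta) ->
  0 < cs -> 0 < as_ ->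
  (forall N : nat, (0 < N)%N -> forall xi : config N, inX cs as_ xi ->
     forall x : 'I_N.+1, w delta xi x <= c2 * cs / Num.sqrt delta)
  /\
  (forall b : R, 0 < b -> as_ < b / 2 -> b + as_ < 1 ->
     (forall n : int, exists c' : R,
        forall N : nat, (0 < N)%N -> forall xi : config N, inX cs as_ xi ->
          Prob ((N%:R) ^+ 2 * delta) xi (inX cs as_) >= 1 - c' * ((N%:R)^-1) ^ n)
     /\
     (exists c : R,
        forall N : nat, (0 < N)%N -> forall xi : config N, inX cs as_ xi ->
          let l := Num.truncn ((N%:R : R) `^ b) in
          forall x : nat, (x <= N - l + 1)%N ->
            Exp ((N%:R) ^+ 2 * delta) xi
              (fun eta => (Aavg l x (fun y => (eta (inord y))%:R)
                           - Aavg l x (fun y => w delta xi (inord y))) ^+ 4)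
            <= c * ((N%:R)^-1) `^ (2 * b))).
Proof.
move=> delta_gt0 p0_le _ as_gt0; split; first exact: (w_le delta_gt0 p0_le).
move=> b b_gt0 _ b_as_lt1; split; first exact: (Prob_inX_ge delta_gt0 p0_le as_gt0).
apply: (Exp_Aavg4_le delta_gt0 p0_le _ b_gt0); lra.
Qed.
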